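(* Let $\mathcal X=\mathcal X_1\times\cdots\times\mathcal X_b$, $\mathcal X_i=\mathbb R^{m_i\times n_i}$ with trace inner product and norms $\|\cdot\|_{(i)}$ (dual $\|\cdot\|_{(i)\star}$), $f$ continuously differentiable with $f\ge f^\star$, $\mathcal D$ a distribution on subsets of $[b]$, and assume constants $L^0_{i,S},L^1_{i,S}\ge0$ exist such that for all $S\in\operatorname{supp}(\mathcal D)$, $X\in\mathcal X$ and $\Gamma$ with $\Gamma_i=0$ for $i\notin S$: $f(X+\Gamma)-f(X)-\langle\nabla f(X),\Gamma\rangle\le\sum_{i\in S}\frac{L^0_{i,S}+L^1_{i,S}\|\nabla_if(X)\|_{(i)\star}}2\|\Gamma_i\|_{(i)}^2$. Let $S\in\operatorname{supp}(\mathcal D)$. Then for all $X\in\mathcal X$, $$\sum_{i\in S}\frac{\|\nabla_if(X)\|_{(i)\star}^2}{2\left(L^0_{i,S}+L^1_{i,S}\|\nabla_if(X)\|_{(i)\star}\right)}\le f(X)-f^\star.$$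
   Context: $\operatorname{supp}(\mathcal D)$ is the set of subsets of $[b]$ with positive probability under $\mathcal D$. *)

From mathcomp Require Import all_boot all_order all_algebra.
From mathcomp Require Import classical_sets reals.
Set Implicit Arguments. Unset Strict Implicit. Unset Printing Implicit Defensive.
Import Order.TTheory GRing.Theory Num.Theory.
Local Open Scope ring_scope.
Local Open Scope classical_set_scope.

Section Defs.
Variable R : realType.

Definition blockT (b : nat) (m n : 'I_b -> nat) :=
  forall i : 'I_b, 'M[R]_(m i, n i).

Definition mx_ip (p q : nat) (A B : 'M[R]_(p, q)) : R := \tr (A^T *m B).

Definition badd b m n (X Y : @blockT b m n) : blockT m n := fun i => X i + Y i.

Definition bip b m n (X Y : @blockT b m n) : R := \sum_(i < b) mx_ip (X i) (Y i).

(* Euclidean (Frobenius) norm on the product space, used only for the topology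
   (all norms are equivalent in finite dimension). *)
Definition bfrob b m n (X : @blockT b m n) : R := Num.sqrt (bip X X).

Definition is_norm (p q : nat) (N : 'M[R]_(p, q) -> R) : Prop :=
  [/\ forall x, 0 <= N x,
      forall x, N x = 0 -> x = 0,
      forall (a : R) x, N (a *: x) = `|a| * N x
    & forall x y, N (x + y) <= N x + N y].

Definition dual_norm (p q : nat) (N : 'M[R]_(p, q) -> R) (G : 'M[R]_(p, q)) : R :=
  sup [set mx_ip G Y | Y in [set Y | N Y <= 1]].

Definition has_gradient b m n (f : @blockT b m n -> R) (gradf : blockT m n -> blockT m n) :=
  forall X (eps : R), 0 < eps -> exists2 delta : R, 0 < delta &
    forall G : blockT m n, bfrob G < delta ->
      `|f (badd X G) - f X - bip (gradf X) G| <= eps * bfrob G.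

Definition continuous_grad b m n (gradf : @blockT b m n -> blockT m n) :=
  forall X (eps : R), 0 < eps -> exists2 delta : R, 0 < delta &
    forall Y : blockT m n, bfrob (badd Y (fun i => - X i)) < delta ->
      bfrob (badd (gradf Y) (fun i => - gradf X i)) < eps.

Definition is_distr b (D : {set 'I_b} -> R) : Prop :=
  (forall S, 0 <= D S) /\ \sum_(S : {set 'I_b}) D S = 1.

Definition in_supp b (D : {set 'I_b} -> R) (S : {set 'I_b}) : Prop := 0 < D S.

End Defs.

From mathcomp Require Import all_boot all_order all_algebra.
From mathcomp Require Import boolp classical_sets reals.
From mathcomp Require Import ring lra.
Set Implicit Arguments. Unset Strict Implicit.
Import Order.TTheory GRing.Theory Num.Theory.
Local Open Scope ring_scope.

(* Fix X and write d_i for the dual norm of the i-th partial gradient and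
   L_i = L0_{i,S} + L1_{i,S} d_i.  Move X along the block direction
   G_i = -(d_i / L_i) Y_i, where Y_i is a unit vector almost attaining d_i.
   The smoothness upper model then makes f decrease by at least
   sum_i d_i^2 / (2 L_i) up to an error that vanishes with the quality of
   the Y_i, and f >= f* bounds that decrease by f(X) - f*. *)

Section BlockDescent.
Variable R : realType.

Lemma ler_of_forall_subM (A B C : R) : 0 <= B ->
  (forall e, 0 < e -> A - e * B <= C) -> A <= C.
Proof.
move=> B_ge0 AC; apply/ler_addgt0Pr => e e_gt0.
have B1_gt0 : 0 < B + 1 by rewrite ltr_wpDl.
have := AC _ (divr_gt0 e_gt0 B1_gt0).
have : e / (B + 1) * B <= e by rewrite mulrAC ler_pdivrMr // ler_pM2l //; lra.
lra.
Qed.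

Lemma mx_ipZr p q (A B : 'M[R]_(p, q)) (t : R) :
  mx_ip A (t *: B) = t * mx_ip A B.
Proof. by rewrite /mx_ip -scalemxAr linearZ. Qed.

Lemma mx_ip0r p q (A : 'M[R]_(p, q)) : mx_ip A 0 = 0.
Proof. by rewrite /mx_ip mulmx0 linear0. Qed.

Lemma bip_supported b (m n : 'I_b -> nat) (S : {set 'I_b}) (X G : blockT R m n) :
  (forall i, i \notin S -> G i = 0) ->
  bip X G = \sum_(i in S) mx_ip (X i) (G i).
Proof.
move=> G0; rewrite /bip [RHS]big_mkcond /=; apply: eq_bigr => i _.
by case: ifPn => // /G0 ->; rewrite mx_ip0r.
Qed.

(* [d / L] is [0] when [L = 0], and then both sides vanish. *)
Lemma quadratic_model_step (L d c nu e : R) :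
  0 <= L -> 0 <= d -> 0 <= nu <= 1 -> d - e <= c ->
  d ^+ 2 / (2 * L) - e * (d / L) <= d / L * c - L / 2 * (d / L * nu) ^+ 2.
Proof.
move=> L_ge0 d_ge0 /andP[nu_ge0 nu_le1] dc.
have [->|L_neq0] := eqVneq L 0; first by rewrite !(invr0, mulr0, mul0r, subr0).
have L_gt0 : 0 < L by rewrite lt_def L_neq0.
have quad : L / 2 * (d / L * nu) ^+ 2 <= d ^+ 2 / (2 * L).
  have -> : d ^+ 2 / (2 * L) = L / 2 * (d / L) ^+ 2 by field.
  rewrite exprMn mulrA ler_piMr ?expr_le1 //.
  by rewrite mulr_ge0 ?sqr_ge0 // divr_ge0 // ltW.
have lin : d / L * (d - e) <= d / L * c by rewrite ler_wpM2l // divr_ge0 // ltW.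
have -> : d ^+ 2 / (2 * L) = d / L * d - d ^+ 2 / (2 * L) by field.
move: quad lin; rewrite mulrBr; lra.
Qed.

Section DualNorm.
Variables (p q : nat) (N : 'M[R]_(p, q) -> R).
Hypothesis normN : is_norm N.

Lemma is_norm0 : N 0 = 0.
Proof. by case: normN => _ _ NZ _; rewrite -(scale0r 0) NZ normr0 mul0r. Qed.

Lemma dual_norm_ge0 G : 0 <= dual_norm N G.
Proof.
rewrite /dual_norm; set E := (X in sup X).
have E0 : E 0 by exists 0; rewrite /= ?is_norm0 ?ler01 ?mx_ip0r.
have [supE|/sup_out -> //] := pselect (has_sup E).
exact: sup_upper_bound supE _ E0.
Qed.

Lemma dual_norm_approx G (e : R) : 0 < e ->
  exists2 Y, N Y <= 1 & dual_norm N G - e <= mx_ip G Y.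
Proof.
move=> e_gt0; rewrite /dual_norm; set E := (X in sup X).
have [supE|/sup_out ->] := pselect (has_sup E).
  have [_ [Y /= NY1 <-] /ltW] := sup_adherent e_gt0 supE.
  by exists Y.
exists 0; first by rewrite is_norm0 ler01.
by rewrite mx_ip0r sub0r lerNl oppr0 ltW.
Qed.

Lemma dual_norm_descent_direction G (L e : R) : 0 <= L -> 0 < e ->
  exists Y, dual_norm N G ^+ 2 / (2 * L) - e * (dual_norm N G / L)
            <= - mx_ip G Y - L / 2 * N Y ^+ 2.
Proof.
move=> L_ge0 e_gt0; have [Y NY_le1 approx] := dual_norm_approx G e_gt0.
have t_ge0 : 0 <= dual_norm N G / L by rewrite divr_ge0 ?dual_norm_ge0.
exists (- (dual_norm N G / L) *: Y).
case: normN => N_ge0 _ NZ _.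
rewrite mx_ipZr NZ normrN ger0_norm // mulNr opprK.
by apply: quadratic_model_step; rewrite ?dual_norm_ge0 ?N_ge0.
Qed.

End DualNorm.
End BlockDescent.

Theorem lemma11 (R : realType) (b : nat) (m n : 'I_b -> nat)
  (N : forall i : 'I_b, 'M[R]_(m i, n i) -> R)
  (f : blockT R m n -> R) (gradf : blockT R m n -> blockT R m n) (fstar : R)
  (D : {set 'I_b} -> R) (L0 L1 : 'I_b -> {set 'I_b} -> R) :
  (forall i, is_norm (N i)) ->
  has_gradient f gradf -> continuous_grad gradf ->
  (forall X, fstar <= f X) ->
  is_distr D ->
  (forall i S, 0 <= L0 i S) -> (forall i S, 0 <= L1 i S) ->
  (forall S, in_supp D S -> forall (X G : blockT R m n),
     (forall i, i \notin S -> G i = 0) ->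
     f (badd X G) - f X - bip (gradf X) G <=
       \sum_(i in S) (L0 i S + L1 i S * dual_norm (N i) (gradf X i)) / 2
                       * N i (G i) ^+ 2) ->
  forall S, in_supp D S -> forall X : blockT R m n,
    \sum_(i in S) dual_norm (N i) (gradf X i) ^+ 2
        / (2 * (L0 i S + L1 i S * dual_norm (N i) (gradf X i)))
      <= f X - fstar.
Proof.
move=> normN _ _ f_ge_fstar _ L0_ge0 L1_ge0 smooth S suppS X.
set d := fun i => dual_norm (N i) (gradf X i).
set L := fun i => L0 i S + L1 i S * d i.
have L_ge0 i : 0 <= L i by rewrite addr_ge0 ?mulr_ge0 ?dual_norm_ge0.
apply: (@ler_of_forall_subM _ _ (\sum_(i in S) d i / L i)).
  by apply: sumr_ge0 => i _; rewrite divr_ge0 ?dual_norm_ge0.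
move=> e e_gt0.
have descent i := dual_norm_descent_direction (normN i) (gradf X i) (L_ge0 i) e_gt0.
pose G : blockT R m n := fun i => if i \in S then projT1 (cid (descent i)) else 0.
have G0 i : i \notin S -> G i = 0 by rewrite /G => /negbTE ->.
have model_gap : \sum_(i in S) d i ^+ 2 / (2 * L i) - e * \sum_(i in S) d i / L i
    <= - bip (gradf X) G - \sum_(i in S) L i / 2 * N i (G i) ^+ 2.
  rewrite (bip_supported _ G0) mulr_sumr -sumrB -sumrN -sumrB.
  by apply: ler_sum => i iS; rewrite /G iS; case: cid.
have := smooth S suppS X G G0; have := f_ge_fstar (badd X G).
move: model_gap; rewrite -/d -/L; lra.
Qed.
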